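(* Let $\mathcal{C}=\mathcal{I}_{\beta_1}\oplus\mathcal{I}_{\beta_2}\oplus\dots\oplus\mathcal{I}_{\beta_u}$ be a $\lambda$-constacyclic code of length $n$ over $\mathbb{F}_q$, where $0\le\beta_1<\dots<\beta_u\le s$. Then $$N_{\langle\rho\rangle}(\mathcal{C}^{*})=\sum_{\substack{\{\gamma_1,\dots,\gamma_l\}\subseteq\{1,\dots,u\}\\ l\ge1,\ \gamma_1<\dots<\gamma_l}}\frac{\prod_{i=1}^{l}(q^{d_{\beta_{\gamma_i}}}-1)\cdot\gcd(1+t\alpha_{\beta_{\gamma_1}},\dots,1+t\alpha_{\beta_{\gamma_l}},n)}{tn}.$$ Moreover, the number of distinct nonzero Hamming weights of codewords of $\mathcal{C}$ is at most $N_{\langle\rho\rangle}(\mathcal{C}^{*})$, with equality if and only if for any two nonzero codewords $c_1,c_2\in\mathcal{C}$ of the same Hamming weight there exists an integer $j$ with $\rho^{j}(c_1)=c_2$.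
   Context: Standing setup: $q$ is a prime power, $n$ a positive integer with $\gcd(n,q)=1$, $\lambda\in\mathbb{F}_q^{*}$ has multiplicative order $t$ (so $t\mid q-1$). $\mathcal{R}=\mathbb{F}_q[x]/\langle x^n-\lambda\rangle$; vectors $(c_0,\dots,c_{n-1})\in\mathbb{F}_q^n$ are identified with $c_0+c_1x+\dots+c_{n-1}x^{n-1}\in\mathcal{R}$, and a $\lambda$-constacyclic code of length $n$ is an ideal of $\mathcal{R}$. Let $\zeta$ be a primitive $tn$-th root of unity in an extension $\mathbb{F}_{q^m}$ with $\zeta^n=\lambda$, so $x^n-\lambda=\prod_{i=0}^{n-1}(x-\zeta^{1+ti})$. The set $\mathcal{S}=\{1+ti:0\le i\le n-1\}$ (residues mod $tn$) is partitioned into the distinct $q$-cyclotomic cosets modulo $tn$, $C_{1+t\alpha_j}=\{(1+t\alpha_j)q^{h}\bmod tn: h\ge 0\}$, $j=0,\dots,s$, with $0=\alpha_0<\alpha_1<\dots<\alpha_s\le n-1$ and $d_j=|C_{1+t\alpha_j}|$. Let $m_j(x)=\prod_{h\in C_{1+t\alpha_j}}(x-\zeta^{h})$ (irreducible over $\mathbb{F}_q$), and let $\mathcal{I}_j$ be the ideal of $\mathcal{R}$ generated by $(x^n-\lambda)/m_j(x)$; this is an irreducible $\lambda$-constacyclic code of dimension $d_j$, said to correspond to the coset $C_{1+t\alpha_j}$, and $\mathcal{R}=\mathcal{I}_0\oplus\dots\oplus\mathcal{I}_s$. The cyclic shift $\rho:\mathcal{R}\to\mathcal{R}$ is $\rho(c(x))=xc(x)$,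 i.e. $(c_0,\dots,c_{n-1})\mapsto(\lambda c_{n-1},c_0,\dots,c_{n-2})$; $\langle\rho\rangle$ is the cyclic group it generates, of order $tn$. $\mathcal{C}^{*}=\mathcal{C}\setminus\{0\}$, and for a group $G$ acting on a finite set $X$, $N_G(X)$ denotes the number of $G$-orbits on $X$. *)

From HB Require Import structures.
From mathcomp Require Import all_boot all_order all_algebra all_field.
Set Implicit Arguments.
Unset Strict Implicit.
Unset Printing Implicit Defensive.
Import GRing.Theory.

(* y lies in the q-cyclotomic coset of x modulo N: y = x q^h mod N for some
   h >= 0.  Since q^h mod N is periodic with period <= N, h < N suffices. *)
Definition coset_rel (N q x y : nat) : bool :=
  [exists h : 'I_N, (x * q ^ h) %% N == y %% N].

Definition qcoset (N q x : nat) : {set 'I_N} :=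
  [set y : 'I_N | coset_rel N q x y].

(* i (0 <= i < n) is the index alpha of a coset C_{1+t alpha} of S:
   1 + t i is the least element of S in its coset. *)
Definition leader (q t n i : nat) : bool :=
  [forall i' : 'I_n, (i' < i) ==> ~~ coset_rel (t * n) q (1 + t * i) (1 + t * i')].

(* [:: alpha_0; alpha_1; ...; alpha_s], increasing, alpha_0 = 0 *)
Definition reps (q t n : nat) : seq nat := [seq i <- iota 0 n | leader q t n i].

Definition alpha (q t n j : nat) : nat := nth 0 (reps q t n) j.

Definition dcos (q t n j : nat) : nat := #|qcoset (t * n) q (1 + t * alpha q t n j)|.

Local Open Scope ring_scope.

Definition rho (F : fieldType) (n : nat) (lam : F) (c : 'rV[F]_n) : 'rV[F]_n :=
  poly_rV (('X * rVpoly c) %% ('X^n - lam%:P)).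

Definition ideal_gen (F : finFieldType) (n : nat) (lam : F) (g : {poly F})
  : {set 'rV[F]_n} :=
  [set c | [exists a : 'rV[F]_n, rVpoly c == (rVpoly a * g) %% ('X^n - lam%:P)]].

Definition Icode (F : finFieldType) (n : nat) (lam : F) (m : nat -> {poly F}) (j : nat)
  : {set 'rV[F]_n} :=
  ideal_gen n lam (('X^n - lam%:P) %/ m j).

Definition dsum_code (F : finFieldType) (n : nat) (lam : F) (m : nat -> {poly F})
  (beta : seq nat) : {set 'rV[F]_n} :=
  [set c | [exists f : {ffun 'I_(size beta) -> 'rV[F]_n},
     [forall i, f i \in Icode n lam m (nth 0%N beta i)] && (c == \sum_i f i)]].

Definition wt (F : fieldType) (n : nat) (c : 'rV[F]_n) : nat := #|[set i : 'I_n | c 0 i != 0]|.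

Definition n_orbits (F : finFieldType) (n : nat) (lam : F) (X : {set 'rV[F]_n}) : nat :=
  #|[set [set y | fconnect (rho lam) x y] | x in X]|.

Definition n_weights (F : finFieldType) (n : nat) (X : {set 'rV[F]_n}) : nat :=
  size (undup [seq wt c | c <- enum X]).

(* Write N = t n.  The shift rho satisfies rho^N = id, so by Burnside's lemma
   for the cyclic group <rho> (burnside_cyclic), N times the number of orbits
   on C* is the total number of nonzero codewords fixed by rho^0, ..., rho^(N-1).
   Codewords are studied through their values c(zeta^h) at the roots zeta^h of
   x^n - lam (ev, ev_inj): rho^k multiplies c(zeta^h) by zeta^(h k)
   (ev_iter_rho), and a codeword of I_j vanishes at the roots outside the coset
   C_{e_j}, e_j = 1 + t alpha_j (Icode_ev_out).  Hence rho^k fixes all of I_j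
   if tn | e_j k and only 0 otherwise (fix_Icode), with |I_j| = q^{d_j}
   (card_Icode).  As the sum C of the I_{beta_i} is direct (dsum_direct), the
   number of codewords of C fixed by rho^k is prod_i (1 + [tn | e_{beta_i} k]
   (q^{d_{beta_i}} - 1)); expanding over subsets G and summing over k with
   sum_dvd_mul gives the formula (n_orbits_dsum), where gcd(g, tn) = gcd(g, n)
   because every e_j is coprime to t.  The statements on weights
   are an instance of values_orbits, since rho is injective and preserves the
   Hamming weight (wt_rho). *)

From Pilot Require Import Defs.
From HB Require Import structures.
From mathcomp Require Import all_boot all_order all_algebra all_field.
From mathcomp Require Import zify.
From mathcomp Require cyclic.
Import GRing.Theory.
Set Implicit Arguments.
Unset Strict Implicit.
Unset Printing Implicit Defensive.

Lemma sum_dvd_ord (d N : nat) : d %| N -> \sum_(k < N) (d %| k) = N %/ d.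
Proof.
move=> dN; rewrite divn_count_dvd.
case: N dN => [|N] dN; first by rewrite big_ord0 big_geq.
rewrite big_add1 /= big_nat_recr //= dN -(big_mkord xpredT (fun k => (d %| k : nat))).
by rewrite big_nat_recl //= dvdn0 addnC.
Qed.

Lemma sum_dvd_mul (N g : nat) : 0 < N -> \sum_(k < N) (N %| g * k) = gcdn g N.
Proof.
move=> N_gt0; set d := gcdn g N.
have d_gt0 : 0 < d by rewrite gcdn_gt0 N_gt0 orbT.
have [N' defN] : exists N', N = N' * d by exists (N %/ d); rewrite divnK ?dvdn_gcdr.
have dvd_gk k : (N %| g * k) = (N' %| k).
  rewrite -(dvdn_pmul2r d_gt0 (d := N') (m := k)) -defN; apply/idP/idP => [Ngk | N_dk].
    have : N %| gcdn (g * k) (N * k) by rewrite dvdn_gcd Ngk dvdn_mulr.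
    by rewrite -muln_gcdl mulnC.
  by apply: dvdn_trans N_dk _; rewrite mulnC dvdn_mul ?dvdn_gcdl.
rewrite (eq_bigr (fun k : 'I_N => (N' %| k : nat))) => [|k _]; last by rewrite dvd_gk.
rewrite sum_dvd_ord ?defN ?dvdn_mulr // mulKn //.
by rewrite lt0n; apply: contraTneq N_gt0; rewrite defN => ->.
Qed.

Definition orbit_set (T : finType) (f : T -> T) (x : T) : {set T} :=
  [set y | fconnect f x y].

Section InjectiveOrbits.
Variables (T : finType) (f : T -> T).
Hypothesis f_inj : injective f.

Lemma orbit_set_eq x y : fconnect f x y -> orbit_set f x = orbit_set f y.
Proof.
by move=> xy; apply/setP => z; rewrite !inE (same_connect (fconnect_sym f_inj) xy).
Qed.

Lemma card_orbit_set x : #|orbit_set f x| = order f x.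
Proof.
rewrite -size_orbit -(card_uniqP (orbit_uniq f x)).
by apply: eq_card => y; rewrite inE fconnect_orbit.
Qed.

Lemma iter_fixed_order x k : (iter k f x == x) = (order f x %| k).
Proof.
set o := order f x; have o_gt0 : 0 < o := order_gt0 f x.
have iter_mul d : iter (d * o) f x = x.
  by elim: d => // d IHd; rewrite mulSn iterD IHd iter_order.
rewrite {1}(divn_eq k o) addnC iterD iter_mul /dvdn; apply/eqP/eqP => [fix_x | ->] //.
by have := findex_iter (ltn_pmod k o_gt0); rewrite fix_x findex0.
Qed.

End InjectiveOrbits.

Lemma stable_fconnect (T : finType) (f : T -> T) (X : {set T}) x y :
  {homo f : z / z \in X} -> x \in X -> fconnect f x y -> y \in X.
Proof. by move=> fX Xx /iter_findex <-; elim: findex => //= k IHk; apply: fX. Qed.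

Section CyclicBurnside.
Variables (T : finType) (f : T -> T) (N : nat).
Hypotheses (N_gt0 : 0 < N) (f_period : forall x, iter N f x = x).

(* f is a permutation, with inverse f^(N-1). *)
Lemma period_inj : injective f.
Proof.
move=> x y fxy.
by rewrite -(f_period x) -(f_period y) -(prednK N_gt0) !iterSr fxy.
Qed.

Lemma burnside_cyclic (X : {set T}) : {homo f : z / z \in X} ->
  #|orbit_set f @: X| * N = \sum_(k < N) #|[set x in X | iter k f x == x]|.
Proof.
move=> fX; have f_inj := period_inj.
have order_dvd x : order f x %| N by rewrite -iter_fixed_order ?f_period.
have -> : \sum_(k < N) #|[set x in X | iter k f x == x]| =
          \sum_(x in X) N %/ order f x.
  transitivity (\sum_(k < N) \sum_(x in X) (iter k f x == x : nat)).
    apply: eq_bigr => k _; rewrite -sum1_card big_mkcond [RHS]big_mkcond.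
    by apply: eq_bigr => x _; rewrite !inE; case: (x \in X); case: eqP.
  rewrite exchange_big; apply: eq_bigr => x _; rewrite -sum_dvd_ord //.
  by apply: eq_bigr => k _; rewrite iter_fixed_order //; case: ifP.
rewrite (partition_big_imset (orbit_set f)) -sum_nat_const.
apply: eq_bigr => _ /imsetP [x0 Xx0 ->].
have in_orbit x : (x \in X) && (orbit_set f x == orbit_set f x0) = (x \in orbit_set f x0).
  apply/idP/idP => [/andP [_ /eqP <-] | ]; first by rewrite inE connect0.
  rewrite inE => x0x; rewrite (orbit_set_eq f_inj x0x) eqxx andbT.
  exact: stable_fconnect x0x.
rewrite (eq_bigl _ _ in_orbit) (eq_bigr (fun=> N %/ #|orbit_set f x0|)).
  by rewrite sum_nat_const mulnC divnK // card_orbit_set.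
by move=> x; rewrite inE => /(orbit_set_eq f_inj) ->; rewrite card_orbit_set.
Qed.

End CyclicBurnside.

Definition n_values (T : finType) (w : T -> nat) (X : {set T}) : nat :=
  size (undup [seq w c | c <- enum X]).

Lemma uniq_map_inj_in (T1 T2 : eqType) (h : T1 -> T2) (s : seq T1) :
  uniq (map h s) -> {in s &, injective h}.
Proof.
elim: s => [|a s IHs] //= /andP [ha hs] x y.
rewrite !inE => /predU1P [-> | xs] /predU1P [-> | ys] // hxy.
- by move: ha; rewrite hxy map_f.
- by move: ha; rewrite -hxy map_f.
- exact: IHs.
Qed.

Lemma size_undup_map_inj (T1 T2 : eqType) (h : T1 -> T2) (s : seq T1) :
  uniq s -> size (undup (map h s)) = size s <-> {in s &, injective h}.
Proof.
move=> s_uniq; split=> [size_eq | h_inj].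
  apply: uniq_map_inj_in; apply/negPn.
  by rewrite -ltn_size_undup size_eq size_map ltnn.
by rewrite undup_id ?size_map // map_inj_in_uniq.
Qed.

Lemma values_orbits (T : finType) (f : T -> T) (w : T -> nat) (X : {set T}) :
  injective f -> (forall x, w (f x) = w x) ->
  n_values w X <= #|orbit_set f @: X| /\
  (n_values w X = #|orbit_set f @: X| <->
   (forall c1 c2, c1 \in X -> c2 \in X -> w c1 = w c2 -> exists j, iter j f c1 = c2)).
Proof.
move=> f_inj wf; set O := orbit_set f @: X.
have w_orbit x y : fconnect f x y -> w y = w x.
  by move=> /iter_findex <-; elim: findex => //= k <-.
(* wO Y is the common w-value of the elements of an orbit Y. *)
pose wO (Y : {set T}) := if [pick y in Y] is Some y then w y else 0.
have wO_orbit x : wO (orbit_set f x) = w x.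
  rewrite /wO; case: pickP => [y | /(_ x)]; rewrite inE; first exact: w_orbit.
  by rewrite connect0.
have -> : n_values w X = size (undup [seq wO Y | Y <- enum O]).
  apply/perm_size/uniq_perm; rewrite ?undup_uniq // => k; rewrite !mem_undup.
  apply/mapP/mapP => [[x /[!mem_enum] Xx ->] | [_ /[!mem_enum] /imsetP [x Xx ->] ->]].
    by exists (orbit_set f x); rewrite ?wO_orbit // mem_enum imset_f.
  by exists x; rewrite ?wO_orbit // mem_enum.
rewrite cardE; split; first by rewrite -(size_map wO) size_undup.
rewrite size_undup_map_inj ?enum_uniq //; split=> [wO_inj c1 c2 Xc1 Xc2 w12 | same_orbit].
  have : orbit_set f c1 = orbit_set f c2.
    by apply: wO_inj; rewrite ?wO_orbit // mem_enum imset_f.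
  move/setP/(_ c2); rewrite !inE connect0 => /iter_findex.
  by exists (findex f c1 c2).
move=> _ _ /[!mem_enum] /imsetP [x1 Xx1 ->] /imsetP [x2 Xx2 ->].
rewrite !wO_orbit => /(same_orbit _ _ Xx1 Xx2) [j <-].
exact/orbit_set_eq/fconnect_iter.
Qed.

Local Open Scope ring_scope.

Section ConstacyclicShift.
Variables (F : finFieldType) (n t : nat) (lam : F).
Variables (L : finFieldType) (iota : {rmorphism F -> L}) (zeta : L).
Hypotheses (n_gt0 : (0 < n)%N) (lamP : t.-primitive_root lam).
Hypotheses (zetaP : (t * n).-primitive_root zeta) (zeta_n : zeta ^+ n = iota lam).

Local Notation N := (t * n)%N.
Local Notation P := ('X^n - lam%:P : {poly F}).
Local Notation rho := (rho lam : 'rV[F]_n -> 'rV[F]_n).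

Lemma t_gt0 : (0 < t)%N. Proof. exact: prim_order_gt0 lamP. Qed.
Lemma N_gt0 : (0 < N)%N. Proof. by rewrite muln_gt0 t_gt0 n_gt0. Qed.

Lemma lam_neq0 : lam != 0.
Proof.
apply/eqP => lam0; have := prim_expr_order lamP.
by rewrite lam0 expr0n eqn0Ngt t_gt0 => /eqP; rewrite eq_sym oner_eq0.
Qed.

Lemma size_P : size P = n.+1. Proof. exact: size_XnsubC. Qed.
Lemma P_neq0 : P != 0. Proof. by rewrite -size_poly_eq0 size_P. Qed.

(* The exponents h < N for which zeta^h is a root of x^n - lam; these are the
   residues 1 + t i of the set S. *)
Definition root_exps : {set 'I_N} := [set h : 'I_N | (zeta ^+ h) ^+ n == iota lam].

Lemma root_expsP (h : 'I_N) : h \in root_exps ->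
  (map_poly iota P).[zeta ^+ h] = 0.
Proof.
rewrite inE rmorphB /= map_polyXn map_polyC /= !hornerE => /eqP ->.
by rewrite subrr.
Qed.

(* The residues 1 + t i (i < n) are n distinct elements of root_exps. *)
Lemma card_root_exps : (n <= #|root_exps|)%N.
Proof.
pose s (i : 'I_n) : 'I_N := Ordinal (ltn_pmod (1 + t * i) N_gt0).
have s_inj : injective s.
  move=> i j /(congr1 val) /= /eqP; rewrite eqn_modDl -!muln_modr !modn_small //.
  by rewrite eqn_pmul2l ?t_gt0 // => /eqP/val_inj.
have s_sub : s @: 'I_n \subset root_exps.
  apply/subsetP=> _ /imsetP [i _ ->]; rewrite inE /= (expr_mod _ (prim_expr_order zetaP)).
  rewrite -exprM (mulnC _ n) exprM zeta_n -rmorphXn /= exprD expr1 exprM.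
  by rewrite (prim_expr_order lamP) expr1n mulr1.
by have := subset_leq_card s_sub; rewrite card_imset // card_ord.
Qed.

(* zeta has order exactly N, so its powers below N are distinct. *)
Lemma zeta_exp_inj (h h' : 'I_N) : zeta ^+ h = zeta ^+ h' -> h = h'.
Proof.
by move/eqP; rewrite (eq_prim_root_expr zetaP) !modn_small // => /eqP/val_inj.
Qed.

(* The value c(zeta^h) of the polynomial of the word c at a power of zeta
   (a coefficient of the Mattson-Solomon transform of c); it is additive. *)
Definition ev (h : nat) (c : 'rV[F]_n) : L := (map_poly iota (rVpoly c)).[zeta ^+ h].

Lemma evD h c1 c2 : ev h (c1 + c2) = ev h c1 + ev h c2.
Proof. by rewrite /ev linearD /= rmorphD hornerD. Qed.

Lemma ev0 h : ev h 0 = 0.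
Proof. by rewrite /ev linear0 rmorph0 horner0. Qed.

Lemma ev_sum h (I : Type) (r : seq I) (p : pred I) (f : I -> 'rV[F]_n) :
  ev h (\sum_(i <- r | p i) f i) = \sum_(i <- r | p i) ev h (f i).
Proof. exact: (big_morph _ (evD h) (ev0 h)). Qed.

(* A word is determined by its values at the roots of x^n - lam, since a
   nonzero polynomial of degree < n has fewer than n roots. *)
Lemma ev_inj (c c' : 'rV[F]_n) :
  (forall h : 'I_N, h \in root_exps -> ev h c = ev h c') -> c = c'.
Proof.
move=> ev_eq; apply: (can_inj rVpolyK); apply/eqP; rewrite -subr_eq0.
set p := rVpoly c - rVpoly c'.
have size_p : (size p <= n)%N.
  by apply: leq_trans (size_polyD _ _) _; rewrite size_polyN geq_max !size_poly.
apply: contraLR size_p; rewrite -ltnNge -(map_poly_eq0 iota) => p_neq0.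
pose rs := [seq zeta ^+ val h | h <- enum root_exps].
have rs_uniq : uniq rs.
  by rewrite map_inj_in_uniq ?enum_uniq // => h h' _ _ /zeta_exp_inj ->.
have rs_roots : all (root (map_poly iota p)) rs.
  apply/allP => _ /mapP [h /[!mem_enum] hS ->]; have := ev_eq h hS.
  by rewrite /root /ev rmorphB hornerD hornerN => ->; rewrite subrr.
have := max_poly_roots p_neq0 rs_roots rs_uniq.
rewrite size_map_poly size_map -cardE; exact: leq_ltn_trans card_root_exps.
Qed.

Lemma ev_mod (p : {poly F}) (h : 'I_N) : h \in root_exps ->
  (map_poly iota (p %% P)).[zeta ^+ h] = (map_poly iota p).[zeta ^+ h].
Proof.
move=> hS; rewrite [in RHS](divp_eq p P) rmorphD rmorphM hornerD hornerM.
by rewrite root_expsP // mulr0 add0r.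
Qed.

Lemma rVpoly_iter_rho k (c : 'rV[F]_n) :
  rVpoly (iter k rho c) = ('X^k * rVpoly c) %% P.
Proof.
have size_mod (p : {poly F}) : (size (p %% P)%R <= n)%N.
  by have := ltn_modpN0 p P_neq0; rewrite size_P ltnS.
elim: k => [|k IHk] /=; first by rewrite mul1r modp_small // size_P ltnS size_poly.
by rewrite /Defs.rho poly_rV_K // IHk modp_mul mulrA -exprS.
Qed.

Lemma iter_rhoE k (c : 'rV[F]_n) : iter k rho c = poly_rV (('X^k * rVpoly c) %% P).
Proof. by rewrite -rVpoly_iter_rho rVpolyK. Qed.

Lemma iter_rhoD k (c1 c2 : 'rV[F]_n) :
  iter k rho (c1 + c2) = iter k rho c1 + iter k rho c2.
Proof. by rewrite !iter_rhoE linearD mulrDr modpD linearD. Qed.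

Lemma iter_rho0 k : iter k rho 0 = 0.
Proof. by rewrite iter_rhoE linear0 mulr0 mod0p linear0. Qed.

Lemma iter_rho_sum k (I : Type) (r : seq I) (p : pred I) (f : I -> 'rV[F]_n) :
  iter k rho (\sum_(i <- r | p i) f i) = \sum_(i <- r | p i) iter k rho (f i).
Proof. exact: (big_morph _ (iter_rhoD k) (iter_rho0 k)). Qed.

Lemma ev_iter_rho k (c : 'rV[F]_n) (h : 'I_N) : h \in root_exps ->
  ev h (iter k rho c) = (zeta ^+ h) ^+ k * ev h c.
Proof.
move=> hS; rewrite /ev rVpoly_iter_rho ev_mod // rmorphM /= map_polyXn.
by rewrite hornerM hornerXn.
Qed.

Lemma iter_rho_period (c : 'rV[F]_n) : iter N rho c = c.
Proof.
apply: ev_inj => h hS; rewrite ev_iter_rho // -exprM mulnC exprM.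
by rewrite (prim_expr_order zetaP) expr1n mul1r.
Qed.

Lemma rho_inj : injective rho.
Proof. exact: period_inj N_gt0 iter_rho_period. Qed.

(* x c(x) = x c(x) - c_{n-1} (x^n - lam) in R: rho shifts the coordinates
   cyclically, multiplying the wrapped-around one by lam. *)
Lemma rVpoly_rho (c : 'rV[F]_n) :
  rVpoly (rho c) = 'X * rVpoly c - ((rVpoly c)`_n.-1)%:P * P.
Proof.
set p := rVpoly c; set a := p`_n.-1.
rewrite (rVpoly_iter_rho 1) expr1 -[X in X %% _](subrK (a%:P * P)) addrC.
rewrite modp_addl_mul_small // size_P ltnS; apply/leq_sizeP => j le_n_j.
have p_hi k : (n <= k)%N -> p`_k = 0.
  by move=> le_n_k; apply: nth_default; apply: leq_trans (size_poly _ _) le_n_k.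
rewrite coefB coefXM coefCM coefB coefXn coefC.
case: j le_n_j => [|j] le_n_j; first by move: n_gt0; rewrite ltnNge le_n_j.
case: (ltngtP j.+1 n) le_n_j => // [lt_n_j | eq_j1_n] _ /=.
  by rewrite subr0 p_hi // mulr0 subr0.
by rewrite subr0 mulr1 /a (_ : n.-1 = j) ?subrr // -eq_j1_n.
Qed.

(* rho moves the i-th coordinate to position i+1 (mod n), up to the unit lam. *)
Lemma rho_coord_neq0 (c : 'rV[F]_n) (i : 'I_n) :
  (rho c 0 (ordS i) != 0) = (c 0 i != 0).
Proof.
rewrite -coef_rVpoly_ord rVpoly_rho coefB coefXM coefCM coefB coefXn coefC /=.
case: (ltngtP i.+1 n) (ltn_ord i) => // [lt_i1_n | eq_i1_n] _.
  by rewrite modn_small //= (ltn_eqF lt_i1_n) subr0 mulr0 subr0 coef_rVpoly_ord.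
have -> : n.-1 = i by rewrite -(succnK i) eq_i1_n.
rewrite eq_i1_n modnn /= (ltn_eqF n_gt0) !sub0r mulrN opprK coef_rVpoly_ord.
by rewrite mulf_eq0 negb_or lam_neq0 andbT.
Qed.

Lemma wt_rho (c : 'rV[F]_n) : wt (rho c) = wt c.
Proof.
rewrite /wt -(card_preimset _ (@ordS_inj n)); apply: eq_card => i.
by rewrite !inE rho_coord_neq0.
Qed.

Local Notation q := #|F|.

(* q is coprime to N = t n, since t | q - 1 and n is coprime to q. *)
Lemma q_gt0 : (0 < q)%N.
Proof. by apply/card_gt0P; exists 0. Qed.

(* lam lies in the multiplicative group of F, of order q - 1. *)
Lemma t_dvd_q1 : (t %| q.-1)%N.
Proof.
rewrite (prim_order_dvd lamP); apply/eqP; apply: (mulIf lam_neq0).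
by rewrite mul1r -exprSr prednK ?expf_card ?q_gt0.
Qed.

Hypothesis n_coprime_q : coprime n q.

Lemma coprime_q_N : coprime q N.
Proof.
rewrite coprimeMr [coprime q n]coprime_sym n_coprime_q andbT coprime_sym.
rewrite -coprime_modr -(prednK q_gt0) -addn1 -modnDml (eqP t_dvd_q1) add0n.
by rewrite coprime_modr coprimen1.
Qed.

(* Multiplication by a power of q is invertible modulo N: an exponent c < N
   undoes it, namely c = -a mod totient N (Euler's theorem). *)
Lemma qpow_cancel x y a b : (x * q ^ a = y * q ^ b %[mod N])%N ->
  exists c : 'I_N, (y * q ^ c = x %[mod N])%N.
Proof.
move=> xy; set T := totient N.
have T_gt0 : (0 < T)%N by rewrite totient_gt0 N_gt0.
have T_le_N : (T <= N)%N.
  have : (\sum_(0 <= d < N) coprime N d <= \sum_(0 <= d < N) 1)%N.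
    by apply: leq_sum => d _; apply: leq_b1.
  by rewrite sum_nat_const_nat subn0 muln1 -totient_count_coprime.
have qT k : (q ^ (T * k) = 1 %[mod N])%N.
  by rewrite expnM -modnXm cyclic.Euler_exp_totient ?coprime_q_N // modnXm exp1n.
have q_modT k : (q ^ k = q ^ (k %% T) %[mod N])%N.
  by rewrite {1}(divn_eq k T) expnD (mulnC (k %/ T)%N) -modnMml qT modnMml mul1n.
have c_lt : ((b + a * T.-1) %% T < N)%N by apply: leq_trans (ltn_pmod _ T_gt0) T_le_N.
exists (Ordinal c_lt) => /=.
rewrite -modnMmr -q_modT modnMmr expnD mulnA -modnMml -xy modnMml -mulnA -expnD.
by rewrite -{1}(muln1 a) -mulnDr add1n prednK // (mulnC a) -modnMmr qT modnMmr muln1.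
Qed.

Definition coset_rep (j : nat) : nat := (1 + t * alpha q t n j)%N.
Definition Q (j : nat) : {set 'I_N} := qcoset N q (coset_rep j).

Lemma QP j (h : 'I_N) :
  reflect (exists a : 'I_N, (coset_rep j * q ^ a) %% N = h)%N (h \in Q j).
Proof.
rewrite inE /coset_rel (modn_small (ltn_ord h)).
by apply: (iffP existsP) => [[a /eqP] | [a /eqP]]; exists a.
Qed.

Lemma Q_sub_root_exps j : Q j \subset root_exps.
Proof.
have lam_rep a : lam ^+ (coset_rep j * q ^ a) = lam.
  elim: a => [|a IHa]; last by rewrite expnSr mulnA mulnC exprM expf_card.
  by rewrite expn0 muln1 exprD expr1 exprM (prim_expr_order lamP) expr1n mulr1.
apply/subsetP => h /QP [a Ea]; rewrite inE -Ea (expr_mod _ (prim_expr_order zetaP)).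
by rewrite -exprM mulnC exprM zeta_n -rmorphXn /= lam_rep.
Qed.

Lemma Q_root_order j (h : 'I_N) k : h \in Q j ->
  ((zeta ^+ h) ^+ k == 1) = (N %| coset_rep j * k)%N.
Proof.
case/QP => a <-; rewrite -exprM -(prim_order_dvd zetaP) {1}/dvdn modnMml -/(dvdn _ _).
have coprime_N_qa : coprime N (q ^ a) by rewrite coprimeXr // coprime_sym coprime_q_N.
by rewrite mulnAC (Gauss_dvdl _ coprime_N_qa).
Qed.

Local Notation R := (size (reps q t n)).

(* Distinct indices alpha_j give disjoint cosets: alpha_j is the least index in
   its coset (leader). *)
Lemma Q_disjoint j j' (h : 'I_N) : (j < R)%N -> (j' < R)%N ->
  h \in Q j -> h \in Q j' -> j = j'.
Proof.
have alpha_lead i : (i < R)%N ->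
    leader q t n (alpha q t n i) && (alpha q t n i \in seq.iota 0 n).
  by move=> iR; rewrite -mem_filter; apply: mem_nth.
wlog lt_jj' : j j' / (j < j')%N.
  move=> W jR j'R hj hj'; case: (ltngtP j j') => // [lt | lt].
    exact: W.
  by apply/esym/W.
move=> jR j'R /QP [a Ea] /QP [b Eb].
have [c Ec] : exists c : 'I_N, (coset_rep j' * q ^ c = coset_rep j %[mod N])%N.
  by apply: (qpow_cancel (a := a) (b := b)); rewrite Ea Eb.
have lt_alpha : (alpha q t n j < alpha q t n j')%N.
  apply: (sorted_ltn_nth ltn_trans) => //.
  by apply: sorted_filter; [exact: ltn_trans | exact: iota_ltn_sorted].
have /andP [_] := alpha_lead j jR; rewrite mem_iota => /= lt_alpha_n.
have /andP [/forallP /(_ (Ordinal lt_alpha_n)) /=] := alpha_lead j' j'R.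
by rewrite lt_alpha /= => /existsP []; exists c; apply/eqP.
Qed.

Section IrreducibleCodes.
Variable m : nat -> {poly F}.
Hypothesis m_roots : forall j, (j < R)%N ->
  map_poly iota (m j) = \prod_(h in Q j) ('X - (zeta ^+ h)%:P).

Definition gen (j : nat) : {poly F} := P %/ m j.

Lemma m_roots_seq j : (j < R)%N ->
  map_poly iota (m j) = \prod_(z <- [seq zeta ^+ val h | h <- enum (Q j)]) ('X - z%:P).
Proof. by move=> jR; rewrite m_roots // big_map big_enum. Qed.

Lemma m_dvd_P j : (j < R)%N -> m j %| P.
Proof.
move=> jR; rewrite -(dvdp_map iota) m_roots_seq //; apply: uniq_roots_dvdp.
  apply/allP => _ /mapP [h /[!mem_enum] /(subsetP (Q_sub_root_exps j)) hS ->].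
  by rewrite /root root_expsP.
rewrite uniq_rootsE map_inj_in_uniq ?enum_uniq // => h h' _ _; exact: zeta_exp_inj.
Qed.

Lemma gen_mul j : (j < R)%N -> gen j * m j = P.
Proof. by move=> jR; rewrite divpK // m_dvd_P. Qed.

Lemma gen_dvd_P j : (j < R)%N -> gen j %| P.
Proof. by move=> jR; rewrite -(gen_mul jR) dvdp_mulr. Qed.

Lemma gen_neq0 j : (j < R)%N -> gen j != 0.
Proof. by move=> jR; apply: contraNneq P_neq0 => gen0; rewrite -(gen_mul jR) gen0 mul0r. Qed.

(* deg m_j = d_j, so the generator has n + 1 - d_j coefficients. *)
Lemma size_gen j : (j < R)%N -> (size (gen j) + #|Q j| = n.+1)%N.
Proof.
move=> jR; have m_neq0 : m j != 0.
  by apply: contraNneq P_neq0 => m0; rewrite -(gen_mul jR) m0 mulr0.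
have size_m : size (m j) = #|Q j|.+1.
  by rewrite -(size_map_poly iota) m_roots_seq // size_prod_XsubC size_map cardE.
have := congr1 (fun p : {poly F} => size p) (gen_mul jR).
by rewrite /= size_mul ?gen_neq0 // size_m size_P addnS.
Qed.

Lemma gen_root j (h : 'I_N) : (j < R)%N -> h \in root_exps -> h \notin Q j ->
  (map_poly iota (gen j)).[zeta ^+ h] = 0.
Proof.
move=> jR hS hQ; have /eqP := congr1 (fun p => (map_poly iota p).[zeta ^+ h]) (gen_mul jR).
rewrite /= rmorphM /= hornerM root_expsP // mulf_eq0 => /orP [/eqP -> // |].
rewrite m_roots // horner_prod => /prodf_eq0 [h' h'Q]; rewrite hornerXsubC subr_eq0.
by move=> /eqP/zeta_exp_inj eq_hh'; rewrite eq_hh' h'Q in hQ.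
Qed.

Lemma Icode_dvd j (c : 'rV[F]_n) : (j < R)%N ->
  (c \in Icode n lam m j) = (gen j %| rVpoly c).
Proof.
move=> jR; rewrite inE -/(gen j); apply/existsP/idP => [[a /eqP ->] | gen_dvd_c].
  by rewrite -dvdp_mod ?gen_dvd_P // dvdp_mull.
exists (poly_rV (rVpoly c %/ gen j)).
rewrite poly_rV_K ?divpK // ?modp_small ?size_P ?ltnS ?size_poly //.
by rewrite size_divp ?gen_neq0 //; apply: leq_trans (leq_subr _ _) (size_poly _ _).
Qed.

Lemma Icode0 j : (j < R)%N -> (0 : 'rV[F]_n) \in Icode n lam m j.
Proof. by move=> jR; rewrite Icode_dvd // linear0 dvdp0. Qed.

Lemma IcodeB j (a b : 'rV[F]_n) : (j < R)%N ->
  a \in Icode n lam m j -> b \in Icode n lam m j -> a - b \in Icode n lam m j.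
Proof. by move=> jR; rewrite !Icode_dvd // linearB; apply: dvdp_sub. Qed.

Lemma Icode_iter_rho j k (a : 'rV[F]_n) : (j < R)%N ->
  a \in Icode n lam m j -> iter k rho a \in Icode n lam m j.
Proof.
by move=> jR; rewrite !Icode_dvd // rVpoly_iter_rho -dvdp_mod ?gen_dvd_P //; apply: dvdp_mull.
Qed.

Lemma Icode_ev_out j (c : 'rV[F]_n) (h : 'I_N) : (j < R)%N ->
  c \in Icode n lam m j -> h \in root_exps -> h \notin Q j -> ev h c = 0.
Proof.
move=> jR; rewrite Icode_dvd // => /divpK c_eq hS hQ.
by rewrite /ev -c_eq rmorphM hornerM gen_root // mulr0.
Qed.

Lemma Icode_ev_eq0 j (c : 'rV[F]_n) : (j < R)%N -> c \in Icode n lam m j ->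
  (forall h : 'I_N, h \in Q j -> ev h c = 0) -> c = 0.
Proof.
move=> jR cI ev_Q; apply: ev_inj => h hS; rewrite ev0.
by have [/ev_Q | /(Icode_ev_out jR cI hS)] := boolP (h \in Q j).
Qed.

(* I_j = { a(x) g_j(x) : deg a < d_j } has q^{d_j} elements. *)
Lemma card_Icode j : (j < R)%N -> #|Icode n lam m j| = (q ^ #|Q j|)%N.
Proof.
move=> jR; set d := #|Q j|; have size_g := size_gen jR.
pose enc (a : 'rV[F]_d) : 'rV[F]_n := poly_rV (rVpoly a * gen j).
have size_enc (a : 'rV[F]_d) : (size (rVpoly a * gen j)%R <= n)%N.
  have size_a : (size (rVpoly a) <= d)%N by apply: size_poly.
  apply: leq_trans (size_polyMleq _ _) _; move: size_a size_g.
  by rewrite -/d; move: (size (rVpoly a)) (size (gen j)) => x y; lia.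
have -> : Icode n lam m j = enc @: 'rV[F]_d.
  apply/setP => c; apply/idP/imsetP => [cI | [a _ ->]]; last first.
    by rewrite Icode_dvd // /enc poly_rV_K // dvdp_mull.
  have gen_dvd_c : gen j %| rVpoly c by rewrite -Icode_dvd.
  exists (poly_rV (rVpoly c %/ gen j)) => //.
  rewrite /enc poly_rV_K ?divpK ?rVpolyK //.
  have size_c : (size (rVpoly c) <= n)%N by apply: size_poly.
  rewrite size_divp ?gen_neq0 //; move: size_c size_g.
  by rewrite -/d; move: (size (rVpoly c)) (size (gen j)) => x y; lia.
rewrite card_imset ?card_mx ?mul1n // => a b /(congr1 (@rVpoly _ _)).
by rewrite /enc !poly_rV_K // => /(mulIf (gen_neq0 jR))/(can_inj rVpolyK).
Qed.

Lemma fix_Icode j k : (j < R)%N ->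
  [set c in Icode n lam m j | iter k rho c == c] =
  if (N %| coset_rep j * k)%N then Icode n lam m j else [set 0].
Proof.
move=> jR; apply/setP => c; rewrite inE.
case: ifP => [N_dvd | N_ndvd]; last rewrite in_set1.
  apply: andb_idr => cI; apply/eqP/ev_inj => h hS; rewrite ev_iter_rho //.
  have [hQ | hQ] := boolP (h \in Q j); last by rewrite (Icode_ev_out jR cI hS hQ) mulr0.
  by move: N_dvd; rewrite -(Q_root_order _ hQ) => /eqP ->; rewrite mul1r.
apply/idP/eqP => [/andP [cI /eqP c_fix] | ->]; last by rewrite Icode0 // iter_rho0 eqxx.
apply: (Icode_ev_eq0 jR cI) => h hQ; have hS := subsetP (Q_sub_root_exps j) h hQ.
have /eqP := ev_iter_rho k c hS; rewrite c_fix -subr_eq0 -{1}(mul1r (ev h c)) -mulrBl.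
by rewrite mulf_eq0 subr_eq0 eq_sym (Q_root_order k hQ) N_ndvd => /eqP.
Qed.

Lemma card_fix_Icode j k : (j < R)%N ->
  #|[set c in Icode n lam m j | iter k rho c == c]| =
  if (N %| coset_rep j * k)%N then (q ^ #|Q j|)%N else 1%N.
Proof. by move=> jR; rewrite fix_Icode //; case: ifP; rewrite ?card_Icode ?cards1. Qed.

Section DirectSums.
Variable beta : seq nat.
Hypotheses (beta_sorted : sorted ltn beta) (beta_lt : all (fun b => b < R)%N beta).

Local Notation u := (size beta).
Local Notation b i := (nth 0%N beta i).
Local Notation C := (dsum_code n lam m beta).
Local Notation fixed X k := [set c in X | iter k rho c == c].

Lemma beta_ltR (i : 'I_u) : (b i < R)%N.
Proof. by apply: (allP beta_lt); apply: mem_nth. Qed.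

(* The sum I_{beta_1} + ... + I_{beta_u} is direct: the components can be read
   off from the coefficients on the pairwise disjoint cosets. *)
Lemma dsum_direct (f : 'I_u -> 'rV[F]_n) :
  (forall i, f i \in Icode n lam m (b i)) -> \sum_i f i = 0 -> forall i, f i = 0.
Proof.
move=> fI sum0 i; apply: (Icode_ev_eq0 (beta_ltR i) (fI i)) => h hQ.
have hS := subsetP (Q_sub_root_exps _) h hQ.
have := congr1 (ev h) sum0; rewrite ev0 ev_sum (bigD1 i) //= big1 ?addr0 // => i' i'_neq_i.
apply: (Icode_ev_out (beta_ltR i') (fI i') hS); apply: contra i'_neq_i => hQ'.
apply/eqP/val_inj/eqP; rewrite -(nth_uniq 0%N (ltn_ord i') (ltn_ord i)).
  by rewrite (Q_disjoint (beta_ltR i') (beta_ltR i) hQ' hQ).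
by apply: (sorted_uniq ltn_trans ltnn).
Qed.

Lemma dsum_unique (f f' : 'I_u -> 'rV[F]_n) :
  (forall i, f i \in Icode n lam m (b i)) -> (forall i, f' i \in Icode n lam m (b i)) ->
  \sum_i f i = \sum_i f' i -> forall i, f i = f' i.
Proof.
move=> fI f'I sum_eq i; apply/eqP; rewrite -subr_eq0; apply/eqP.
apply: (dsum_direct (f := fun i => f i - f' i)) => [i' |].
  exact: IcodeB (beta_ltR i') (fI i') (f'I i').
by rewrite sumrB sum_eq subrr.
Qed.

(* Since the decomposition is unique and rho-equivariant, the fixed points of
   rho^k in C are the sums of fixed points in the components. *)
Lemma card_fix_dsum k :
  #|fixed C k| = (\prod_(i < u) #|fixed (Icode n lam m (b i)) k|)%N.
Proof.
set A := fun i : 'I_u => fixed (Icode n lam m (b i)) k.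
set fam := [set f : {ffun 'I_u -> 'rV[F]_n} | [forall i, f i \in A i]].
have famI f : f \in fam -> forall i, f i \in Icode n lam m (b i).
  by rewrite inE => /forallP famf i; move: (famf i); rewrite inE => /andP [].
have -> : fixed C k = (fun f : {ffun 'I_u -> 'rV[F]_n} => \sum_i f i) @: fam.
  apply/setP => c; rewrite inE; apply/andP/imsetP => [[] | [f f_fam ->]].
    rewrite inE => /existsP [f /andP [/forallP fI /eqP ->]] /eqP f_fix.
    exists f => //; rewrite inE; apply/forallP => i; rewrite inE fI /=.
    apply/eqP/(dsum_unique (f := fun i => iter k rho (f i))) => //.
      by move=> i'; apply: Icode_iter_rho (beta_ltR _) (fI i').
    by rewrite -iter_rho_sum.
  split; first by rewrite inE; apply/existsP; exists f; rewrite eqxx andbT; apply/forallP/famI.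
  rewrite iter_rho_sum; apply/eqP/eq_bigr => i _.
  by move: f_fam; rewrite inE => /forallP /(_ i); rewrite inE => /andP [_ /eqP].
rewrite card_in_imset => [|f f' f_fam f'_fam sum_eq]; last first.
  by apply/ffunP/(dsum_unique (famI f f_fam) (famI f' f'_fam) sum_eq).
rewrite (eq_card (B := family (fun i => mem (A i)))) => [|f].
  by rewrite card_family foldrE big_map big_enum.
by rewrite inE; apply/forallP/familyP.
Qed.

Definition nz_fixed (i : 'I_u) (k : nat) : nat :=
  ((N %| coset_rep (b i) * k) * (q ^ #|Q (b i)| - 1))%N.

Definition rep_gcd (G : {set 'I_u}) : nat := \big[gcdn/0%N]_(i in G) coset_rep (b i).

(* Expanding prod_i (1 + nz_fixed i k) over subsets G of {1, ..., u}. *)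
Lemma card_fix_dsum_expand k :
  #|fixed C k| = (\sum_(G : {set 'I_u}) \prod_(i in G) nz_fixed i k)%N.
Proof.
have q_pow_gt0 i : (0 < q ^ #|Q (b i)|)%N by rewrite expn_gt0 q_gt0.
rewrite card_fix_dsum (eq_bigr (fun i => nz_fixed i k + 1)%N) => [|i _]; last first.
  by rewrite card_fix_Icode ?beta_ltR // /nz_fixed; case: ifP; rewrite ?mul1n ?subnK.
rewrite (bigA_distr 1%N addn); apply: eq_bigr => G _; rewrite [RHS]big_mkcond.
by apply: eq_bigr => i _; case: (i \in G).
Qed.

Lemma prod_nz_fixed k (G : {set 'I_u}) : (\prod_(i in G) nz_fixed i k =
  (N %| rep_gcd G * k) * \prod_(i in G) (q ^ #|Q (b i)| - 1))%N.
Proof.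
rewrite big_split /=; congr (_ * _)%N.
have -> : (rep_gcd G * k = \big[gcdn/0%N]_(i in G) (coset_rep (b i) * k))%N.
  by apply: (big_morph (fun x => x * k)%N (fun x y => muln_gcdl x y k) (mul0n k)).
have [N_dvd | N_ndvd] := boolP (N %| \big[gcdn/0%N]_(i in G) (coset_rep (b i) * k))%N.
  by rewrite big1 // => i iG; move/dvdn_biggcdP: N_dvd => /(_ i iG) ->.
have [i iG /negbTE N_ndvd_i] : exists2 i, i \in G & ~~ (N %| coset_rep (b i) * k)%N.
  apply/exists_inP; apply: contraR N_ndvd => /exists_inPn N_dvd_all.
  by apply/dvdn_biggcdP => i iG; move: (N_dvd_all i iG); rewrite negbK.
by rewrite (bigD1 i) //= N_ndvd_i.
Qed.

(* Since each e_j = 1 + t alpha_j is coprime to t, summing over k < tn gives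
   gcd(g_G, tn) = gcd(g_G, n). *)
Lemma sum_dvd_rep_gcd (G : {set 'I_u}) : G != set0 ->
  (\sum_(k < N) (N %| rep_gcd G * k) = gcdn (rep_gcd G) n)%N.
Proof.
case/set0Pn => i iG; rewrite sum_dvd_mul ?N_gt0 // (mulnC t n) Gauss_gcdl //.
have coprime_rep_t : coprime (coset_rep (b i)) t.
  by rewrite coprime_sym -coprime_modr /coset_rep addnC (mulnC t) modnMDl coprime_modr coprimen1.
by apply: coprime_dvdl coprime_rep_t; apply: (biggcdn_inf i).
Qed.

Lemma dsum0 : (0 : 'rV[F]_n) \in C.
Proof.
rewrite inE; apply/existsP; exists [ffun=> 0]; apply/andP; split.
  by apply/forallP => i; rewrite ffunE Icode0 // beta_ltR.
by rewrite big1 // => i _; rewrite ffunE.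
Qed.

Lemma dsum_rho c : c \in C -> rho c \in C.
Proof.
rewrite !inE => /existsP [f /andP [/forallP fI /eqP ->]].
apply/existsP; exists [ffun i => rho (f i)]; apply/andP; split.
  by apply/forallP => i; rewrite ffunE (Icode_iter_rho 1) ?beta_ltR.
rewrite -[rho _]/(iter 1 rho _) iter_rho_sum.
by apply/eqP/eq_bigr => i _; rewrite ffunE.
Qed.

(* The counting formula, multiplied by tn, over the naturals: Burnside's
   lemma, then the fixed-point count, summed first over k < tn. *)
Lemma n_orbits_dsum : (n_orbits lam (C :\ 0%R) * N =
  \sum_(G : {set 'I_u} | G != set0)
     (\prod_(i in G) (q ^ #|Q (b i)| - 1) * gcdn (rep_gcd G) n))%N.
Proof.
rewrite /n_orbits (burnside_cyclic N_gt0 iter_rho_period) => [|c]; last first.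
  rewrite !in_setD1 => /andP [c_neq0 cC]; rewrite dsum_rho // andbT.
  apply: contra c_neq0 => /eqP rho_c0; apply/eqP/rho_inj.
  by rewrite rho_c0; apply/esym/(iter_rho0 1).
transitivity (\sum_(k < N) \sum_(G : {set 'I_u} | G != set0) \prod_(i in G) nz_fixed i k)%N.
  apply: eq_bigr => k _.
  have -> : fixed (C :\ 0) k = fixed C k :\ 0 by apply/setP => c; rewrite !inE andbA.
  have := cardsD1 0 (fixed C k); rewrite inE dsum0 iter_rho0 eqxx.
  by rewrite card_fix_dsum_expand (bigD1 set0) //= big_set0 add1n => -[].
rewrite exchange_big /=; apply: eq_bigr => G G_neq0.
under eq_bigr => k _ do rewrite prod_nz_fixed.
by rewrite -big_distrl /= sum_dvd_rep_gcd // mulnC.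
Qed.

End DirectSums.
End IrreducibleCodes.
End ConstacyclicShift.

Theorem theorem1 (F : finFieldType) (n t : nat) (lam : F)
  (L : finFieldType) (iota : {rmorphism F -> L}) (zeta : L)
  (m : nat -> {poly F}) (beta : seq nat) :
  (0 < n)%N -> coprime n #|F| ->
  t.-primitive_root lam ->
  (t * n).-primitive_root zeta -> zeta ^+ n = iota lam ->
  (forall j, (j < size (reps #|F| t n))%N ->
     map_poly iota (m j) =
     \prod_(h in qcoset (t * n) #|F| (1 + t * alpha #|F| t n j)) ('X - (zeta ^+ h)%:P)) ->
  sorted ltn beta -> all (fun b => b < size (reps #|F| t n))%N beta ->
  let C := dsum_code n lam m beta in
  let Cstar := C :\ 0 in
  ((n_orbits lam Cstar)%:R : rat) =
    \sum_(G : {set 'I_(size beta)} | G != set0)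
      ((\prod_(i in G) (#|F| ^ dcos #|F| t n (nth 0%N beta i) - 1)%N
        * gcdn (\big[gcdn/0%N]_(i in G) (1 + t * alpha #|F| t n (nth 0%N beta i))) n)%N%:R
       / (t * n)%N%:R)
  /\ (n_weights Cstar <= n_orbits lam Cstar)%N
  /\ (n_weights Cstar = n_orbits lam Cstar <->
      (forall c1 c2, c1 \in Cstar -> c2 \in Cstar -> wt c1 = wt c2 ->
         exists j : nat, iter j (rho lam) c1 = c2)).
Proof.
move=> n_gt0 n_coprime_q lamP zetaP zeta_n m_roots beta_sorted beta_lt C Cstar.
have [weights_le weights_eq] :=
  values_orbits Cstar (rho_inj n_gt0 lamP zetaP zeta_n) (wt_rho n_gt0 lamP).
split; last by split.
have N_neq0 : ((t * n)%N%:R : rat) != 0.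
  by rewrite Num.Theory.pnatr_eq0 -lt0n (N_gt0 n_gt0 lamP).
rewrite -mulr_suml -natr_sum; apply: (mulIf N_neq0); rewrite mulfVK // -natrM.
by rewrite (n_orbits_dsum n_gt0 lamP zetaP zeta_n n_coprime_q m_roots beta_sorted beta_lt).
Qed.
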